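(* For every positive integer $k$, as formal power series in $q$, $$\sum_{n\ge1}\mathrm{spt}k_{do}(n)\,q^n=V_k(q)\,(-q^2;q^2)_\infty+W_k(q)\,(-q;q^2)_\infty+2(-q)^k(q^2;q^2)_{k-1},$$ where $V_1(q)=2q$, $V_k(q)=(q^{2k-1}-q)V_{k-1}(q)+2q^k$ for $k>1$, and $W_1(q)=q$, $W_k(q)=(q^{2k-1}-q)W_{k-1}(q)+q^{2k-1}$ for $k>1$.
   Context: For a partition $\pi$, $s(\pi)$ is its smallest part. $\mathrm{Spt}k_{do}(n)$ is the set of partitions $\pi$ of $n$ in which $s(\pi)$ occurs exactly $k$ times and the remaining parts (those larger than $s(\pi)$) are pairwise distinct and each has parity different from that of $s(\pi)$; $\mathrm{spt}k_{do}(n)=|\mathrm{Spt}k_{do}(n)|$. Notation: $(a;q)_0=1$, $(a;q)_n=\prod_{j=0}^{n-1}(1-aq^j)$, $(a;q)_\infty=\prod_{j\ge0}(1-aq^j)$. *)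

From mathcomp Require Import all_boot all_order all_algebra.
Set Implicit Arguments. Unset Strict Implicit. Unset Printing Implicit Defensive.
Import GRing.Theory Num.Theory.
Local Open Scope ring_scope.

(* A partition of n is encoded by its multiplicity function
   m : 'I_(n+1) -> 'I_(n+1): part i (1 <= i <= n) occurs m i times. This is a bijection with partitions of n. *)
Definition is_partition_of (n : nat) (m : {ffun 'I_n.+1 -> 'I_n.+1}) : bool :=
  ((m ord0 : nat) == 0%N) && ((\sum_(i < n.+1) (i * m i)%N)%N == n).

Definition in_sptk_do (k : nat) {n : nat} (m : {ffun 'I_n.+1 -> 'I_n.+1}) : bool :=
  is_partition_of (n:=n) m &&
  [exists s : 'I_n.+1,
     [&& (0 < s)%N, (m s : nat) == k,
         [forall i : 'I_n.+1, ((0 < i)%N && (i < s)%N) ==> ((m i : nat) == 0%N)] &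
         [forall i : 'I_n.+1, (s < i)%N ==>
             (((m i : nat) <= 1)%N && (((m i : nat) == 1%N) ==> (odd i != odd s)))]]].

Definition sptk_do (k n : nat) : nat := #|[pred m : {ffun 'I_n.+1 -> 'I_n.+1} | in_sptk_do k m]|.

(* q-Pochhammer with general base: qpoch a b N = prod_{j<N} (1 - a b^j),
   so (a;q)_N = qpoch a 'X N and (a;q^2)_N = qpoch a 'X^2 N. *)
Definition qpoch (a b : {poly int}) (N : nat) : {poly int} :=
  \prod_(j < N) (1 - a * b ^+ j).

Fixpoint Vk (k : nat) : {poly int} :=
  match k with
  | 0 => 0
  | 1 => 2%:R *: 'X
  | S k1 => ('X ^+ (k.*2.-1) - 'X) * Vk k1 + 2%:R *: 'X ^+ k
  end.

Fixpoint Wk (k : nat) : {poly int} :=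
  match k with
  | 0 => 0
  | 1 => 'X
  | S k1 => ('X ^+ (k.*2.-1) - 'X) * Wk k1 + 'X ^+ (k.*2.-1)
  end.

(* Truncation of the right-hand side: the infinite products are replaced by
   their first N factors; all omitted factors are 1 + O(q^(N+1)), so the
   coefficients of q^n with n < N agree with those of the formal power series. *)
Definition rhs_trunc (k N : nat) : {poly int} :=
  Vk k * qpoch (- 'X ^+ 2) ('X ^+ 2) N
  + Wk k * qpoch (- 'X) ('X ^+ 2) N
  + 2%:R *: ((- 'X) ^+ k * qpoch ('X ^+ 2) ('X ^+ 2) k.-1).

(* Fix the smallest part s >= 1.  The partitions of Spt k_do with smallest part
   s are generated by q^(k s) P_s, where P_s is the product of (1 + q^i) over
   the i > s of parity opposite to s; so the generating function is
   G_k = sum_(s >= 1) q^(k s) P_s.  From P_s = (1 + q^(s+1)) P_(s+2) we get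
     q^((k+1)(s+2)) P_(s+2) = q^(2k+1) q^(k s) P_s - q q^(k(s+2)) P_(s+2),
   and summing over s gives
     G_(k+1) = 2 q^(k+1) P_1 + q^(2k+1) P_0 + (q^(2k+1) - q) G_k,
   with P_0 = (-q;q^2)_oo and P_1 = (-q^2;q^2)_oo: this is the recurrence
   defining V_k and W_k.  Since G_0 diverges, all series are truncated at q^L
   and compared modulo q^L.  The truncation leaves a boundary term, equal to
   -2q for k = 0; multiplied at each step by q^(2k+1) - q, it becomes the
   summand 2 (-q)^k (q^2;q^2)_(k-1). *)

From mathcomp Require Import all_boot all_order all_algebra.
From mathcomp Require Import ring zify.
Import GRing.Theory.
Set Implicit Arguments.
Unset Strict Implicit.
Unset Printing Implicit Defensive.

Local Open Scope ring_scope.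

Section EqModX.

Variable R : comNzRingType.
Implicit Types (p q : {poly R}) (M : nat).

Definition eqmodX M p q := exists r : {poly R}, p - q = 'X^M * r.

Lemma eqmodX_refl M p : eqmodX M p p.
Proof. by exists 0; rewrite subrr mulr0. Qed.

Lemma eqmodX_sym M p q : eqmodX M p q -> eqmodX M q p.
Proof. by case=> r e; exists (- r); rewrite mulrN -e opprB. Qed.

Lemma eqmodX_trans M p q r : eqmodX M p q -> eqmodX M q r -> eqmodX M p r.
Proof. by case=> a ea [b eb]; exists (a + b); rewrite mulrDr -ea -eb; ring. Qed.

Lemma eqmodXD M p q p' q' :
  eqmodX M p q -> eqmodX M p' q' -> eqmodX M (p + p') (q + q').
Proof. by case=> a ea [b eb]; exists (a + b); rewrite mulrDr -ea -eb; ring. Qed.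

Lemma eqmodXM M p q p' q' :
  eqmodX M p q -> eqmodX M p' q' -> eqmodX M (p * p') (q * q').
Proof.
case=> a ea [b eb]; exists (a * p' + q * b).
by rewrite mulrDr mulrA -ea mulrCA -eb; ring.
Qed.

Lemma eqmodXB M p q p' q' :
  eqmodX M p q -> eqmodX M p' q' -> eqmodX M (p - p') (q - q').
Proof. by case=> a ea [b eb]; exists (a - b); rewrite mulrBr -ea -eb; ring. Qed.

Lemma eqmodXMl M c p q : eqmodX M p q -> eqmodX M (c * p) (c * q).
Proof. exact/eqmodXM/eqmodX_refl. Qed.

Lemma eqmodXW M M' p q : (M' <= M)%N -> eqmodX M p q -> eqmodX M' p q.
Proof.
by move=> le [a ea]; exists ('X^(M - M') * a); rewrite ea mulrA -exprD subnKC.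
Qed.

Lemma eqmodX_coef M p q i : eqmodX M p q -> (i < M)%N -> p`_i = q`_i.
Proof. by case=> a ea lt; apply/eqP; rewrite -subr_eq0 -coefB ea coefXnM lt. Qed.

Lemma eqmodX_mulXn M a p : (M <= a)%N -> eqmodX M ('X^a * p) 0.
Proof.
by move=> le; exists ('X^(a - M) * p); rewrite subr0 mulrA -exprD subnKC.
Qed.

Lemma eqmodX_sum M I (r : seq I) (P : pred I) (F G : I -> {poly R}) :
  (forall i, P i -> eqmodX M (F i) (G i)) ->
  eqmodX M (\sum_(i <- r | P i) F i) (\sum_(i <- r | P i) G i).
Proof. by move=> FG; apply: big_ind2 => //; [apply: eqmodX_refl|apply: eqmodXD]. Qed.

Lemma eqmodX_prod M I (r : seq I) (P : pred I) (F G : I -> {poly R}) :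
  (forall i, P i -> eqmodX M (F i) (G i)) ->
  eqmodX M (\prod_(i <- r | P i) F i) (\prod_(i <- r | P i) G i).
Proof. by move=> FG; apply: big_ind2 => //; [apply: eqmodX_refl|apply: eqmodXM]. Qed.

End EqModX.

Definition opp_parity_prod (L s : nat) : {poly int} :=
  \prod_(s.+1 <= i < L | odd i != odd s) (1 + 'X^i).

Lemma opp_parity_prod_geq L s : (L <= s.+1)%N -> opp_parity_prod L s = 1.
Proof. exact: big_geq. Qed.

Lemma opp_parity_prodS L s : (s.+1 < L)%N ->
  opp_parity_prod L s = (1 + 'X^(s.+1)) * opp_parity_prod L s.+2.
Proof.
move=> lt; have flip b : (~~ b != b) by case: b.
rewrite /opp_parity_prod big_ltn_cond //= flip negbK.
case: (ltnP s.+2 L) => [lt2|ge2]; last by rewrite !big_geq // leqW.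
by rewrite big_ltn_cond //= negbK eqxx.
Qed.

Lemma opp_parity_prod_trunc M L s : (M <= L)%N ->
  eqmodX M (opp_parity_prod L s) (opp_parity_prod M s).
Proof.
move=> le; have tail_eqmod1 a : (M <= a)%N ->
    eqmodX M (\prod_(a <= i < L | odd i != odd s) (1 + 'X^i)) 1.
  move=> Ma; apply: (@eqmodX_trans _ _ _ (\prod_(a <= i < L | odd i != odd s) 1)).
    rewrite [X in eqmodX _ _ X]big_nat_cond [X in eqmodX _ X _]big_nat_cond.
    apply: eqmodX_prod => i /andP[/andP[ai _] _].
    rewrite -[X in eqmodX _ _ X]addr0 -[X in 1 + X]mulr1.
    by apply/eqmodXD/eqmodX_mulXn; [apply: eqmodX_refl|apply: leq_trans ai].
  by rewrite big1 //; apply: eqmodX_refl.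
case: (leqP M s.+1) => [Ms|sM].
  by rewrite [X in eqmodX _ _ X]opp_parity_prod_geq //; apply: tail_eqmod1.
rewrite /opp_parity_prod (big_cat_nat (ltnW sM) le) /=.
by rewrite -[X in eqmodX _ _ X]mulr1; apply/eqmodXMl/tail_eqmod1.
Qed.

Lemma opp_parity_prodSS L s : (s <= L)%N ->
  opp_parity_prod L.+2 s = opp_parity_prod L s * (1 + 'X^(L + (odd L == odd s))).
Proof.
rewrite leq_eqVlt => /orP[/eqP<- | lt]; rewrite /opp_parity_prod.
  rewrite [X in _ = X * _]big_geq // big_ltn_cond // big_geq //=.
  by case: (odd s); rewrite /= mulr1 mul1r addn1.
rewrite big_mkcond [X in _ = X * _]big_mkcond !big_nat_recr //= 1?ltnW // -mulrA.
by congr (_ * _); case: (odd L); case: (odd s); rewrite /= ?mulr1 ?mul1r ?addn0 ?addn1.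
Qed.

Lemma opp_parity_prod_qpoch N s : (s <= 1)%N ->
  opp_parity_prod N.*2.+1 s = qpoch (- 'X^(s.+1)) ('X^2) N.
Proof.
move=> s_le1; elim: N => [|N IH].
  by rewrite opp_parity_prod_geq // /qpoch big_ord0.
rewrite /qpoch big_ord_recr -/(qpoch _ _ N) -IH doubleS opp_parity_prodSS; last first.
  exact: leq_trans s_le1 _.
rewrite /= odd_double mulNr opprK -exprM -exprD.
suff -> : (N.*2.+1 + (~~ false == odd s) = s.+1 + 2 * N)%N by [].
by case: s s_le1 {IH} => [|[|]] //= _; rewrite -muln2; lia.
Qed.

Definition sptk_gf (L k : nat) : {poly int} :=
  \sum_(1 <= s < L) 'X^(k * s) * opp_parity_prod L s.

Definition Ck (k : nat) : {poly int} :=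
  2%:R *: ((- 'X) ^+ k * qpoch ('X ^+ 2) ('X ^+ 2) k.-1).

Lemma VkSS k : Vk k.+2 = ('X^(k.*2.+3) - 'X) * Vk k.+1 + 2%:R *: 'X^(k.+2).
Proof. by []. Qed.

Lemma WkSS k : Wk k.+2 = ('X^(k.*2.+3) - 'X) * Wk k.+1 + 'X^(k.*2.+3).
Proof. by []. Qed.

Lemma CkSS k : Ck k.+2 = ('X^(k.*2.+3) - 'X) * Ck k.+1.
Proof.
rewrite /Ck /= /qpoch big_ord_recr /= -/(qpoch _ _ k) !scaler_nat -exprM.
by rewrite -addnn !(exprD, exprS); ring.
Qed.

Section Recurrence.

Variable l : nat.
Local Notation P := (opp_parity_prod l.+2).
Local Notation G := (sptk_gf l.+2).

(* The last term is X^(2k+1) times the two summands X^(k s) * P s, s = l, l+1,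
   left over by the telescoping; for k = 0 it is 2X + X^(l+2), which is where
   Ck comes from. *)
Lemma sptk_gfS k :
  G k.+1 = ('X^(k.+1) * P 1%N) *+ 2 + 'X^(k.*2.+1) * P 0%N
    + ('X^(k.*2.+1) - 'X) * G k - 'X^((k * l.+2).+1) * (1 + 'X^k + 'X^(l.+1)).
Proof.
pose u k' s := 'X^(k' * s) * P s.
have split_first k' : G k' = u k' 1%N + \sum_(0 <= j < l) u k' j.+2.
  by rewrite /sptk_gf big_add1 /= big_nat_recl.
have split_last : \sum_(0 <= j < l) u k j = P 0%N + G k - u k l - u k l.+1.
  have -> : P 0%N + G k = \sum_(0 <= j < l.+2) u k j.
    by rewrite big_ltn // /u muln0 mul1r.
  by rewrite !big_nat_recr //=; ring.
have step j : (j < l)%N -> u k.+1 j.+2 = 'X^(k.*2.+1) * u k j - 'X * u k j.+2.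
  move=> lt_jl; rewrite /u (@opp_parity_prodS _ j); last by lia.
  have -> : (k.+1 * j.+2 = k * j + k + k + j + 2)%N by nia.
  have -> : (k * j.+2 = k * j + k + k)%N by nia.
  by rewrite -addnn !(exprD, exprS) expr0; ring.
have P_last : P l.+1 = 1 by apply: opp_parity_prod_geq.
have P_last2 : P l = 1 + 'X^(l.+1).
  by rewrite opp_parity_prodS // opp_parity_prod_geq // mulr1.
rewrite split_first; under eq_big_nat => j /andP[_ lt_jl] do rewrite step //.
rewrite sumrB -!mulr_sumr split_last.
rewrite (_ : \sum_(0 <= j < l) u k j.+2 = G k - u k 1%N); last first.
  by rewrite split_first addrC addKr.
rewrite /u P_last P_last2 !muln1.
by rewrite !mulnS -addnn !(exprD, exprS); ring.
Qed.

Lemma sptk_gf_eqmodX k : (0 < k)%N ->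
  eqmodX l.+2 (G k) (Vk k * P 1%N + Wk k * P 0%N + Ck k).
Proof.
case: k => // k _; elim: k => [|k IH]; rewrite sptk_gfS.
  exists (-1); rewrite /Ck /qpoch big_ord0 /= !expr1 expr0 subrr mul0r mulr1.
  by rewrite !scaler_nat !exprS; ring.
rewrite doubleS -[X in eqmodX _ _ X]subr0.
apply: eqmodXB; last by apply: eqmodX_mulXn; nia.
have -> : Vk k.+2 * P 1%N + Wk k.+2 * P 0%N + Ck k.+2 =
    'X^(k.+2) * P 1%N *+ 2 + 'X^(k.*2.+3) * P 0%N
    + ('X^(k.*2.+3) - 'X) * (Vk k.+1 * P 1%N + Wk k.+1 * P 0%N + Ck k.+1).
  by rewrite VkSS WkSS CkSS scaler_nat; ring.
by apply: eqmodXD; [apply: eqmodX_refl | apply: eqmodXMl].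
Qed.

End Recurrence.

Lemma sptk_gf_trunc M L k : (0 < M <= L)%N -> (0 < k)%N ->
  eqmodX M (sptk_gf L k) (sptk_gf M k).
Proof.
move=> /andP[M_gt0 le_ML] k_gt0; rewrite /sptk_gf (big_cat_nat M_gt0 le_ML) /=.
rewrite -[X in eqmodX _ _ X]addr0; apply: eqmodXD.
  by apply: eqmodX_sum => s _; apply/eqmodXMl/opp_parity_prod_trunc.
apply: (@eqmodX_trans _ _ _ (\sum_(M <= s < L) 0)); last first.
  by rewrite big1_eq; apply: eqmodX_refl.
rewrite big_nat_cond [X in eqmodX _ _ X]big_nat_cond.
apply: eqmodX_sum => s /andP[/andP[Ms _] _]; apply: eqmodX_mulXn.
by apply: leq_trans Ms _; rewrite leq_pmull.
Qed.

Lemma card_restricted_partitions (R : nzRingType) n (A : nat -> nat -> bool) :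
  (#|[pred m : {ffun 'I_n.+1 -> 'I_n.+1} |
       ((\sum_(i < n.+1) i * m i)%N == n) && [forall i : 'I_n.+1, A i (m i)]]|%:R : R)
  = (\prod_(i < n.+1) \sum_(c < n.+1 | A i c) 'X^(i * c))`_n.
Proof.
rewrite bigA_distr_big_dep coef_sum -sum1_card natr_sum big_mkcond [RHS]big_mkcond.
apply: eq_bigr => m _; rewrite inE.
rewrite -(big_morph _ (fun a b => exprD _ a b) (expr0 _)) coefXn eq_sym.
have -> : [forall i : 'I_n.+1, A i (m i)] = (m \in family (fun i c : 'I_n.+1 => A i c)).
  by apply/forallP/familyP.
by case: (_ == _); case: (m \in _).
Qed.

Lemma card_exists_uniq (T I : finType) (P : pred T) (Q : I -> pred T) :
  (forall x i j, Q i x -> Q j x -> i = j) ->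
  #|[pred x | P x && [exists i, Q i x]]| = (\sum_i #|[pred x | P x && Q i x]|)%N.
Proof.
move=> Q_uniq; under [RHS]eq_bigr => i _ do rewrite -sum1_card.
rewrite -sum1_card (exchange_big_dep xpredT) //= big_mkcond.
apply: eq_bigr => x _; rewrite inE.
case: (boolP [exists i, Q i x]) => [/existsP[i Qix] | /existsPn noQ].
  rewrite andbT; case: (boolP (P x)) => Px; last first.
    by rewrite big_pred0 // => j; rewrite inE (negbTE Px).
  rewrite (big_pred1 i) // => j; rewrite inE /= Px.
  by apply/idP/eqP => [Qjx | ->]; first exact: Q_uniq Qjx Qix.
by rewrite andbF big_pred0 // => i; rewrite inE (negbTE (noQ i)) andbF.
Qed.

Definition allowed_mult (k s i c : nat) : bool :=
  if (i < s)%N then c == 0%N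
  else if i == s then c == k
  else (c <= 1)%N && ((c == 1%N) ==> (odd i != odd s)).

Lemma in_sptk_doE k n (m : {ffun 'I_n.+1 -> 'I_n.+1}) :
  in_sptk_do k m = ((\sum_(i < n.+1) i * m i)%N == n)
    && [exists s : 'I_n.+1, (0 < s)%N && [forall i : 'I_n.+1, allowed_mult k s i (m i)]].
Proof.
rewrite /in_sptk_do /is_partition_of [(_ == 0%N) && _]andbC -andbA; congr (_ && _).
apply/andP/existsP => [[m0 /existsP[s /and4P[s_gt0 ms below above]]] |
                        [s /andP[s_gt0 /forallP allowed]]].
  exists s; rewrite s_gt0; apply/forallP => i; rewrite /allowed_mult.
  case: (ltngtP i s) => [lt_is | gt_is | /val_inj->]; last by [].
  - case: (posnP i) => [i0 | i_gt0]; last by rewrite (implyP (forallP below i)) ?i_gt0.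
    by rewrite (_ : i = ord0) //; apply: val_inj.
  - exact: implyP (forallP above i) gt_is.
split; first by have := allowed ord0; rewrite /allowed_mult s_gt0.
apply/existsP; exists s; rewrite s_gt0.
have := allowed s; rewrite /allowed_mult ltnn eqxx => -> /=.
apply/andP; split; apply/forallP => i; apply/implyP.
  by case/andP=> _ lt_is; have := allowed i; rewrite /allowed_mult lt_is.
move=> gt_is; have := allowed i.
by rewrite /allowed_mult ltnNge (ltnW gt_is) /= (gtn_eqF gt_is).
Qed.

Lemma allowed_mult_uniq k n (m : {ffun 'I_n.+1 -> 'I_n.+1}) (s s' : 'I_n.+1) :
    (0 < k)%N ->
  [forall i : 'I_n.+1, allowed_mult k s i (m i)] ->
  [forall i : 'I_n.+1, allowed_mult k s' i (m i)] -> s = s'.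
Proof.
move=> k_gt0; wlog lt_ss' : s s' / (s < s')%N.
  move=> gen As As'; case: (ltngtP s s') => [lt | lt | /val_inj //].
    exact: gen.
  by apply/esym/gen.
move=> /forallP /(_ s) As /forallP /(_ s) As'.
move: As As'; rewrite /allowed_mult ltnn eqxx lt_ss' => /eqP-> /eqP k0.
by move: k_gt0; rewrite k0.
Qed.

Definition mult_gf (n k s i : nat) : {poly int} :=
  \sum_(c < n.+1 | allowed_mult k s i c) 'X^(i * c).

Lemma mult_gf_lt n k s i : (i < s)%N -> mult_gf n k s i = 1.
Proof.
move=> lt_is; rewrite /mult_gf (big_pred1 ord0) ?muln0 // => c.
by rewrite /allowed_mult lt_is.
Qed.

Lemma mult_gf_eq n k s :
  mult_gf n k s s = if (k <= n)%N then 'X^(k * s) else 0.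
Proof.
rewrite /mult_gf /allowed_mult ltnn eqxx; case: ifPn => [le_kn | gt_kn].
  by rewrite (big_pred1 (Ordinal (le_kn : (k < n.+1)%N))) //= mulnC.
rewrite big_pred0 // => c; apply/negbTE; apply: contra gt_kn => /eqP <-.
by rewrite -ltnS.
Qed.

Lemma mult_gf_gt n k s i : (s < i <= n)%N ->
  mult_gf n k s i = if odd i != odd s then 1 + 'X^i else 1.
Proof.
case/andP=> lt_si le_in.
rewrite /mult_gf /allowed_mult ltnNge (ltnW lt_si) /= gtn_eqF //.
rewrite -(big_mkord (fun c : nat => (c <= 1)%N && ((c == 1%N) ==> (odd i != odd s)))
                   (fun c => 'X^(i * c))).
rewrite big_ltn_cond // big_ltn_cond /=; last by lia.
rewrite big_nat_cond big_pred0 => [|[|[|c]]] //=; last by rewrite andbF.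
by case: (odd i != odd s); rewrite muln0 ?muln1 expr0 ?addr0.
Qed.

Lemma prod_mult_gf n k s : (0 < s <= n)%N ->
  eqmodX n.+1 (\prod_(i < n.+1) mult_gf n k s i)
              ('X^(k * s) * opp_parity_prod n.+1 s).
Proof.
case/andP=> s_gt0 le_sn.
have -> : \prod_(i < n.+1) mult_gf n k s i = mult_gf n k s s * opp_parity_prod n.+1 s.
  rewrite -(big_mkord xpredT (mult_gf n k s)) (big_cat_nat (leq0n s)) ?leqW //=.
  rewrite [X in X * _]big_nat_cond big1 ?mul1r; last first.
    by move=> i /andP[/andP[_ lt_is] _]; apply: mult_gf_lt.
  rewrite big_ltn ?ltnS //; congr (_ * _); rewrite /opp_parity_prod [RHS]big_mkcond.
  by apply: eq_big_nat => i /andP[lt_si lt_in]; rewrite mult_gf_gt ?lt_si.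
rewrite mult_gf_eq; case: ifPn => [_|gt_kn]; first exact: eqmodX_refl.
rewrite mul0r; apply/eqmodX_sym/eqmodX_mulXn.
by rewrite -ltnNge in gt_kn; apply: leq_trans gt_kn (leq_pmulr _ s_gt0).
Qed.

Lemma sptk_do_coef k n : (0 < k)%N -> (sptk_do k n)%:Z = (sptk_gf n.+1 k)`_n.
Proof.
move=> k_gt0; rewrite /sptk_do (eq_card (in_sptk_doE k (n:=n))).
rewrite card_exists_uniq => [|m s s' /andP[_ As] /andP[_ As']]; last first.
  exact: allowed_mult_uniq As As'.
rewrite -natz natr_sum big_ord_recl /= eq_card0 => [|m]; last by rewrite inE andbF.
rewrite add0r /sptk_gf big_add1 big_mkord /= coef_sum; apply: eq_bigr => i _.
rewrite /bump /= card_restricted_partitions; apply: eqmodX_coef (ltnSn n).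
exact/prod_mult_gf/ltn_ord.
Qed.

Lemma rhs_truncE k N : rhs_trunc k N =
  Vk k * opp_parity_prod N.*2.+1 1 + Wk k * opp_parity_prod N.*2.+1 0 + Ck k.
Proof. by rewrite !opp_parity_prod_qpoch. Qed.

Theorem theorem3 (k : nat) (hk : (0 < k)%N) (n N : nat) (hnN : (n < N)%N) :
  ((sptk_do k n)%:Z : int) = (rhs_trunc k N)`_n.
Proof.
rewrite sptk_do_coef // rhs_truncE; apply: eqmodX_coef (ltnSn n).
case: N hnN => // N le_nN.
apply: eqmodX_trans (eqmodX_sym (sptk_gf_trunc (L := N.+1.*2.+1) _ hk)) _.
  by rewrite -muln2; lia.
apply: eqmodXW (sptk_gf_eqmodX N.*2.+1 hk); rewrite -muln2; lia.
Qed.
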